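(* Let ${\cal C}$ be a semi-degenerate congruence-modular variety and $A\in{\cal C}$ a semiprime algebra. Then ${\rm Con}(A)$ is a strongly Stone lattice iff ${\rm Con}(A)/\equiv_A$ is a strongly Stone lattice.
   Context: ${\cal C}$ semi-degenerate: no nontrivial member has a one-element subalgebra. ${\rm Con}(A)$: congruence lattice with bounds $\Delta_A,\nabla_A=A^2$; $[\cdot,\cdot]_A$: modular commutator. A congruence $\phi\ne\nabla_A$ is prime if $[\theta,\zeta]_A\subseteq\phi$ implies $\theta\subseteq\phi$ or $\zeta\subseteq\phi$. $\rho_A(\theta)$: intersection of all prime congruences containing $\theta$. $A$ semiprime: $\rho_A(\Delta_A)=\Delta_A$. $\theta\equiv_A\zeta$ iff $\rho_A(\theta)=\rho_A(\zeta)$; ${\rm Con}(A)/\equiv_A$ is the quotient bounded lattice. A bounded lattice $L$ is strongly Stone if for every $U\subseteq L$ there is a complemented $e\in L$ with $\{x\in L\mid x\wedge u=0\ \forall u\in U\}=\{x\mid x\le e\}$. *)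

From mathcomp Require Import all_boot.
Set Implicit Arguments.
Unset Strict Implicit.
Unset Printing Implicit Defensive.

Record signature := Signature { op_sym : Type; arity : op_sym -> nat }.

Record algebra (S : signature) := Algebra {
  carrier :> Type;
  interp : forall f : op_sym S, ('I_(arity f) -> carrier) -> carrier }.

Inductive term (S : signature) : Type :=
  | Var : nat -> term S
  | App : forall f : op_sym S, ('I_(arity f) -> term S) -> term S.

Fixpoint eval (S : signature) (A : algebra S) (v : nat -> A) (t : term S) : A :=
  match t with
  | Var n => v n
  | App f args => @interp S A f (fun i => @eval S A v (args i))
  end.

(* A variety is given by a set of identities; its members are the algebras
   satisfying them (equational class; = HSP-closed class by Birkhoff). *)
Definition identities (S : signature) := term S -> term S -> Prop.

Definition models (S : signature) (E : identities S) (A : algebra S) : Prop :=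
  forall s t, E s t -> forall v : nat -> A, @eval S A v s = @eval S A v t.

Definition rel (T : Type) := T -> T -> Prop.

Definition subrel (T : Type) (r s : rel T) : Prop := forall x y, r x y -> s x y.
Definition releq (T : Type) (r s : rel T) : Prop := forall x y, r x y <-> s x y.

Definition is_congruence (S : signature) (A : algebra S) (th : rel A) : Prop :=
  (forall x, th x x) /\ (forall x y, th x y -> th y x) /\
  (forall x y z, th x y -> th y z -> th x z) /\
  (forall (f : op_sym S) (a b : 'I_(arity f) -> A),
      (forall i, th (a i) (b i)) -> th (@interp S A f a) (@interp S A f b)).

Definition cg_bot (S : signature) (A : algebra S) : rel A := fun x y => x = y.
Definition cg_top (S : signature) (A : algebra S) : rel A := fun _ _ => True.
Definition cg_meet (S : signature) (A : algebra S) (th ze : rel A) : rel A :=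
  fun x y => th x y /\ ze x y.
Definition cg_join (S : signature) (A : algebra S) (th ze : rel A) : rel A :=
  fun x y => forall d, @is_congruence S A d ->
    (forall a b, th a b \/ ze a b -> d a b) -> d x y.

Definition congruence_modular (S : signature) (E : identities S) : Prop :=
  forall B : algebra S, models E B ->
  forall al be ga : rel B,
    @is_congruence S B al -> @is_congruence S B be -> @is_congruence S B ga ->
    subrel al ga ->
    subrel (cg_meet (cg_join al be) ga) (cg_join al (cg_meet be ga)).

Definition one_elt_subalgebra (S : signature) (B : algebra S) (b : B) : Prop :=
  forall (f : op_sym S) (a : 'I_(arity f) -> B),
    (forall i, a i = b) -> @interp S B f a = b.

Definition semi_degenerate (S : signature) (E : identities S) : Prop :=
  forall B : algebra S, models E B ->
    (exists x y : B, x <> y) -> ~ (exists b : B, one_elt_subalgebra b).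

Definition sel (T : Type) (P : nat -> bool) (a c : nat -> T) : nat -> T :=
  fun k => if P k then a k else c k.

Definition centralizes (S : signature) (A : algebra S) (al be de : rel A) : Prop :=
  forall (t : term S) (P : nat -> bool) (a b c d : nat -> A),
    (forall k, al (a k) (b k)) -> (forall k, be (c k) (d k)) ->
    de (@eval S A (sel P a c) t) (@eval S A (sel P a d) t) ->
    de (@eval S A (sel P b c) t) (@eval S A (sel P b d) t).

(* [al, be]_A: the least congruence de with C(al, be; de); in a
   congruence-modular variety this is the modular commutator. *)
Definition commutator (S : signature) (A : algebra S) (al be : rel A) : rel A :=
  fun x y => forall de, @is_congruence S A de -> centralizes al be de -> de x y.

Definition prime_cg (S : signature) (A : algebra S) (phi : rel A) : Prop :=
  @is_congruence S A phi /\ ~ releq phi (@cg_top S A) /\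
  forall th ze, @is_congruence S A th -> @is_congruence S A ze ->
    subrel (commutator th ze) phi -> subrel th phi \/ subrel ze phi.

Definition rho (S : signature) (A : algebra S) (th : rel A) : rel A :=
  fun x y => forall phi, prime_cg phi -> subrel th phi -> phi x y.

Definition semiprime (S : signature) (A : algebra S) : Prop :=
  releq (rho (@cg_bot S A)) (@cg_bot S A).

Definition cg_equiv (S : signature) (A : algebra S) (th ze : rel A) : Prop :=
  releq (rho th) (rho ze).

(* A bounded lattice presented by a carrier predicate on T, an equivalence
   eqv (equality of the lattice), operations meet/join and bounds bot/top.
   x <= e is x /\ e = x.  A subset U of the lattice is given by a set of
   representatives. *)
Definition strongly_stone (T : Type) (car : T -> Prop) (eqv : T -> T -> Prop)
    (meet join : T -> T -> T) (bot top : T) : Prop :=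
  forall U : T -> Prop, (forall u, U u -> car u) ->
  exists e, car e /\
    (exists f, car f /\ eqv (meet e f) bot /\ eqv (join e f) top) /\
    (forall x, car x ->
       ((forall u, U u -> eqv (meet x u) bot) <-> eqv (meet x e) x)).

Definition Con_strongly_stone (S : signature) (A : algebra S) : Prop :=
  strongly_stone (@is_congruence S A) (@releq A)
    (@cg_meet S A) (@cg_join S A) (@cg_bot S A) (@cg_top S A).

(* Con(A)/==_A is strongly Stone: elements are classes [th], with
   [th] /\ [ze] = [th /\ ze], [th] \/ [ze] = [th \/ ze], 0 = [Delta], 1 = [Nabla]. *)
Definition Con_quot_strongly_stone (S : signature) (A : algebra S) : Prop :=
  strongly_stone (@is_congruence S A) (@cg_equiv S A)
    (@cg_meet S A) (@cg_join S A) (@cg_bot S A) (@cg_top S A).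

(* Since A is semiprime, a congruence that is ==_A-equivalent to Delta_A equals
   Delta_A, so Con(A) and Con(A)/==_A have the same annihilators.  A
   complemented e with Ann(U) = (e] in Con(A) therefore does the same job in the
   quotient; conversely, rho(e) does it in Con(A), with complement rho(f),
   because rho(th) = Nabla forces th = Nabla.
   That last fact means every proper congruence lies below a prime one.  By Zorn's
   lemma it suffices that the union of a chain of proper congruences is proper and
   that maximal congruences are prime.  Both reduce to semi-degeneracy, which
   forbids a nontrivial algebra with a one-element subalgebra in the variety: a
   reduced power of A along the chain, resp. a quotient of the algebra A(Nabla)
   of pairs, would be one.  For maximal congruences this uses the term-condition
   calculus with Delta_{al,be}, which is available in congruence-modular
   varieties through the shifting lemma. *)

From mathcomp Require Import all_boot.
From mathcomp Require boolp classical_sets.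
From Stdlib Require Import FunctionalExtensionality PropExtensionality ProofIrrelevance.
From Stdlib Require Import ClassicalEpsilon Classical.
Set Implicit Arguments.
Unset Strict Implicit.
Unset Printing Implicit Defensive.

Lemma proj1_sig_inj (T : Type) (P : T -> Prop) (x y : {z | P z}) :
  proj1_sig x = proj1_sig y -> x = y.
Proof. exact: (eq_sig_hprop (fun _ => proof_irrelevance _)). Qed.

Section Congruences.
Variables (S : signature) (B : algebra S).
Implicit Types (th ze de : rel B) (x y z : B).

Lemma cong_refl th : is_congruence th -> forall x, th x x.
Proof. by case. Qed.

Lemma cong_sym th : is_congruence th -> forall x y, th x y -> th y x.
Proof. by case=> _ []. Qed.

Lemma cong_trans th : is_congruence th -> forall x y z, th x y -> th y z -> th x z.
Proof. by case=> _ [_ []]. Qed.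

Lemma cong_op th : is_congruence th ->
  forall f (a b : 'I_(arity f) -> B), (forall i, th (a i) (b i)) -> th (interp a) (interp b).
Proof. by case=> _ [_ []]. Qed.

Lemma cong_eval th : is_congruence th ->
  forall v w : nat -> B, (forall k, th (v k) (w k)) -> forall t, th (eval v t) (eval w t).
Proof.
move=> Hth v w Hvw; elim=> [n|f args IH] /=; first exact: Hvw.
by apply: (cong_op Hth) => i; apply: IH.
Qed.

Lemma inf_cong (P Q : rel B -> Prop) : (forall de, P de -> is_congruence de) ->
  is_congruence (fun x y => forall de, P de -> Q de -> de x y).
Proof.
move=> HP; split; [|split; [|split]].
- by move=> x de /HP Hde _; apply: cong_refl.
- by move=> x y Hxy de /[dup] /HP Hde Pde Qde; apply: (cong_sym Hde); apply: Hxy.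
- move=> x y z Hxy Hyz de /[dup] /HP Hde Pde Qde.
  exact: (cong_trans Hde (Hxy de Pde Qde) (Hyz de Pde Qde)).
- by move=> f a b Hab de /[dup] /HP Hde Pde Qde; apply: (cong_op Hde) => i; apply: Hab.
Qed.

Lemma bot_cong : is_congruence (@cg_bot S B).
Proof.
split; [|split; [|split]] => //; first by move=> x y z -> ->.
by move=> f a b Hab; congr interp; apply: functional_extensionality.
Qed.

Lemma top_cong : is_congruence (@cg_top S B).
Proof. by do !split. Qed.

Lemma meet_cong th ze : is_congruence th -> is_congruence ze -> is_congruence (cg_meet th ze).
Proof.
move=> Hth Hze; split; [|split; [|split]].
- by move=> x; split; apply: cong_refl.
- by move=> x y [h1 h2]; split; apply: cong_sym.
- move=> x y z [h1 h2] [h3 h4].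
  by split; [apply: (cong_trans Hth) h3 | apply: (cong_trans Hze) h4].
- move=> f a b Hab; split; [apply: (cong_op Hth) | apply: (cong_op Hze)] => i; by case: (Hab i).
Qed.

Lemma join_cong th ze : is_congruence (cg_join th ze).
Proof. exact: inf_cong. Qed.

Lemma join_l th ze : subrel th (cg_join th ze).
Proof. by move=> x y h de _; apply; left. Qed.

Lemma join_r th ze : subrel ze (cg_join th ze).
Proof. by move=> x y h de _; apply; right. Qed.

Lemma join_min th ze de : is_congruence de -> subrel th de -> subrel ze de ->
  subrel (cg_join th ze) de.
Proof. by move=> Hde Hth Hze x y; apply=> // u v []; [apply: Hth | apply: Hze]. Qed.

End Congruences.

Section Constructions.
Variable S : signature.

Definition power_alg (B : algebra S) (I : Type) : algebra S :=
  @Algebra S (I -> B) (fun f a i => interp (fun k => a k i)).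

Lemma eval_power (B : algebra S) I (v : nat -> power_alg B I) t i :
  eval v t i = eval (fun k => v k i) t.
Proof.
elim: t i => [n|f args IH] i //=.
by congr interp; apply: functional_extensionality => k; rewrite IH.
Qed.

Lemma models_power E (B : algebra S) I : models E B -> models E (power_alg B I).
Proof.
move=> HB s t Hst v; apply: functional_extensionality => i.
by rewrite !eval_power; apply: HB.
Qed.

Definition op_closed (B : algebra S) (X : B -> Prop) :=
  forall f (a : 'I_(arity f) -> B), (forall i, X (a i)) -> X (interp a).

Definition sub_alg (B : algebra S) (X : B -> Prop) (HX : @op_closed B X) : algebra S :=
  @Algebra S {x | X x}
    (fun f a => exist _ (interp (fun i => proj1_sig (a i))) (HX f _ (fun i => proj2_sig (a i)))).

Lemma eval_sub (B : algebra S) X (HX : @op_closed B X) (v : nat -> sub_alg HX) t :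
  proj1_sig (eval v t) = @eval S B (fun k => proj1_sig (v k)) t.
Proof.
elim: t => [n|f args IH] //=.
by congr interp; apply: functional_extensionality => k; rewrite IH.
Qed.

Lemma models_sub E (B : algebra S) X (HX : @op_closed B X) :
  models E B -> models E (sub_alg HX).
Proof. by move=> HB s t Hst v; apply: proj1_sig_inj; rewrite !eval_sub; apply: HB. Qed.

End Constructions.

Section Quotient.
Variables (S : signature) (B : algebra S) (th : rel B) (Hth : is_congruence th).

Definition quot_car := {X : B -> Prop | exists x, X = th x}.

Definition cls (x : B) : quot_car := exist _ (th x) (ex_intro _ x erefl).

Definition repr (X : quot_car) : B :=
  proj1_sig (constructive_indefinite_description _ (proj2_sig X)).

Lemma cls_eq x y : th x y -> cls x = cls y.
Proof.
move=> Hxy; apply: proj1_sig_inj; apply: functional_extensionality => z.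
apply: propositional_extensionality; split => [Hxz | Hyz].
- exact: (cong_trans Hth (cong_sym Hth Hxy)).
- exact: (cong_trans Hth Hxy).
Qed.

Lemma cls_inj x y : cls x = cls y -> th x y.
Proof.
move=> e; have -> : th x = th y by exact: (f_equal (@proj1_sig _ _) e).
exact: cong_refl.
Qed.

Lemma cls_repr X : cls (repr X) = X.
Proof.
apply: proj1_sig_inj => /=.
by rewrite -(proj2_sig (constructive_indefinite_description _ (proj2_sig X))).
Qed.

Lemma repr_cls x : th (repr (cls x)) x.
Proof. by apply: cls_inj; rewrite cls_repr. Qed.

Definition quot_alg : algebra S :=
  @Algebra S quot_car (fun f a => cls (interp (fun i => repr (a i)))).

Lemma eval_quot (v : nat -> quot_alg) t : eval v t = cls (@eval S B (fun k => repr (v k)) t).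
Proof.
elim: t => [n|f args IH] /=; first by rewrite cls_repr.
by apply: cls_eq; apply: (cong_op Hth) => i; rewrite IH; apply: repr_cls.
Qed.

Lemma models_quot E : models E B -> models E quot_alg.
Proof. by move=> HB s t Hst v; rewrite !eval_quot; congr cls; apply: HB. Qed.

End Quotient.

Section PairAlgebra.
Variables (S : signature) (B : algebra S) (al : rel B) (Hal : is_congruence al).

Definition is_pair (p : power_alg B bool) : Prop := al (p true) (p false).

Lemma is_pair_closed : op_closed is_pair.
Proof. by move=> f a Ha; apply: (cong_op Hal). Qed.

Definition pair_alg : algebra S := sub_alg is_pair_closed.

Definition pfst (P : pair_alg) : B := proj1_sig P true.
Definition psnd (P : pair_alg) : B := proj1_sig P false.

Lemma pair_al (P : pair_alg) : al (pfst P) (psnd P).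
Proof. exact: proj2_sig P. Qed.

Definition mkpair x y (h : al x y) : pair_alg :=
  exist is_pair (fun b : bool => if b then x else y) h.

Definition diag x : pair_alg := mkpair (cong_refl Hal x).

Lemma pair_ext (P Q : pair_alg) : pfst P = pfst Q -> psnd P = psnd Q -> P = Q.
Proof.
by move=> e1 e2; apply: proj1_sig_inj; apply: functional_extensionality; case.
Qed.

Lemma eval_pfst (v : nat -> pair_alg) t : pfst (eval v t) = eval (fun k => pfst (v k)) t.
Proof. by rewrite /pfst eval_sub eval_power. Qed.

Lemma eval_psnd (v : nat -> pair_alg) t : psnd (eval v t) = eval (fun k => psnd (v k)) t.
Proof. by rewrite /psnd eval_sub eval_power. Qed.

Lemma diag_op f (a : 'I_(arity f) -> B) : interp (fun i => diag (a i)) = diag (interp a).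
Proof. exact: pair_ext. Qed.

Lemma models_pair_alg E : models E B -> models E pair_alg.
Proof. by move=> HB; apply: models_sub; apply: models_power. Qed.

Definition pair_rel (g1 g2 : rel B) : rel pair_alg :=
  fun P Q => g1 (pfst P) (pfst Q) /\ g2 (psnd P) (psnd Q).

Lemma pair_rel_cong g1 g2 : is_congruence g1 -> is_congruence g2 ->
  is_congruence (pair_rel g1 g2).
Proof.
move=> Hg1 Hg2; split; [|split; [|split]].
- by move=> P; split; apply: cong_refl.
- by move=> P Q [h1 h2]; split; apply: cong_sym.
- move=> P Q R [h1 h2] [h3 h4].
  by split; [apply: (cong_trans Hg1) h3 | apply: (cong_trans Hg2) h4].
- move=> f a b Hab; split; [apply: (cong_op Hg1) | apply: (cong_op Hg2)] => i; by case: (Hab i).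
Qed.

Definition fst_ker := pair_rel (@cg_bot S B) (@cg_top S B).
Definition snd_ker := pair_rel (@cg_top S B) (@cg_bot S B).

Lemma fst_ker_cong : is_congruence fst_ker.
Proof. by apply: pair_rel_cong; [apply: bot_cong | apply: top_cong]. Qed.

Lemma snd_ker_cong : is_congruence snd_ker.
Proof. by apply: pair_rel_cong; [apply: top_cong | apply: bot_cong]. Qed.

End PairAlgebra.

Arguments pair_rel {S B al} Hal g1 g2 _ _.
Arguments fst_ker {S B al} Hal _ _.
Arguments snd_ker {S B al} Hal _ _.

(* Gumm's shifting lemma, from the modular law in the algebra of [al]-pairs. *)
Lemma shifting (S : signature) (E : identities S) (B : algebra S) :
  congruence_modular E -> models E B ->
  forall al be ga : rel B, is_congruence al -> is_congruence be -> is_congruence ga ->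
  subrel (cg_meet al be) ga ->
  forall a b c d, be a b -> be c d -> al a c -> al b d -> ga a c -> ga b d.
Proof.
move=> HCM HB al be ga Hal Hbe Hga Hm a b c d Hab Hcd Hac Hbd Hgac.
pose al' := cg_meet (fst_ker Hal) (pair_rel Hal ga ga).
pose be' := pair_rel Hal be be.
have Cal' : is_congruence al'.
  by apply: meet_cong; [apply: fst_ker_cong | apply: pair_rel_cong].
have Cbe' : is_congruence be' by apply: pair_rel_cong.
have Hmod := HCM _ (models_pair_alg HB) _ _ _ Cal' Cbe' (fst_ker_cong Hal)
  (fun P Q => @proj1 _ _).
have Hjoin : cg_join al' be' (diag Hal b) (mkpair Hal Hbd).
  have Cj := join_cong al' be'.
  apply: (cong_trans Cj (y := diag Hal a)); first by apply: join_r; split; apply: cong_sym.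
  apply: (cong_trans Cj (y := mkpair Hal Hac)); last by apply: join_r.
  by apply: join_l; do !split => //; apply: cong_refl.
have Hal' : al' (diag Hal b) (mkpair Hal Hbd).
  apply: (join_min Cal' _ _ (Hmod _ _ (conj Hjoin (conj erefl I)))) => // P Q [[_ HPQ2] [HPQ _]].
  split; first by split.
  split; first by rewrite HPQ; apply: cong_refl.
  apply: Hm; split => //.
  by apply: (cong_trans Hal (cong_sym Hal (pair_al P))); rewrite HPQ; apply: pair_al.
by case: Hal' => _ [].
Qed.

Section Substitution.
Variable S : signature.

Fixpoint subst (s : nat -> term S) (t : term S) : term S :=
  match t with
  | Var n => s n
  | App f args => App (fun i => subst s (args i))
  end.

Lemma eval_subst (B : algebra S) (w : nat -> B) s t :
  eval w (subst s t) = eval (fun j => eval w (s j)) t.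
Proof.
elim: t => [n|f args IH] //=.
by congr interp; apply: functional_extensionality => i; rewrite IH.
Qed.

End Substitution.

Definition upd (T : Type) (v : nat -> T) (k : nat) (x : T) : nat -> T :=
  fun j => if j == k then x else v j.

Section SyntacticCongruence.
Variables (S : signature) (B : algebra S) (X : B -> Prop).

Definition syntactic_cong : rel B :=
  fun P Q => forall t (v : nat -> B) k, X (eval (upd v k P) t) <-> X (eval (upd v k Q) t).

Lemma syntactic_cong_sat P Q : syntactic_cong P Q -> (X P <-> X Q).
Proof. by move=> HPQ; have := HPQ (Var S 0) (fun _ => P) 0. Qed.

(* Plugging [interp (a with i0 := h)] into [t] at variable [k] is again a
   polynomial in [h]: variable 0 is the hole, [i.+1] the argument [a i], and
   [(n + j).+1] the other variables [v j] of [t]. *)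
Lemma syntactic_cong_op_at f (a : 'I_(arity f) -> B) (i0 : 'I_(arity f)) P Q :
  syntactic_cong P Q ->
  syntactic_cong (interp (fun i => if i == i0 then P else a i))
                 (interp (fun i => if i == i0 then Q else a i)).
Proof.
move=> HPQ t v k; set n := arity f.
pose sg j := if j == k then App (fun i : 'I_n => if i == i0 then Var S 0 else Var S i.+1)
             else Var S (n + j).+1.
pose w j := if j is j'.+1 then oapp a (v (j' - n)) (insub j') else v k.
have key h : eval (upd w 0 h) (subst sg t) =
             eval (upd v k (interp (fun i => if i == i0 then h else a i))) t.
  rewrite eval_subst; congr eval; apply: functional_extensionality => j.
  rewrite /sg /upd; case: (j == k) => /=.
  - by congr interp; apply: functional_extensionality => i; case: (i == i0); rewrite //= valK.
  - by rewrite insubN ?addKn // -leqNgt leq_addr.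
by rewrite -!key; apply: HPQ.
Qed.

Lemma syntactic_cong_is_cong : is_congruence syntactic_cong.
Proof.
split; [|split; [|split]].
- by move=> P t v k.
- by move=> P Q HPQ t v k; split; apply HPQ.
- by move=> P Q R HPQ HQR t v k; rewrite HPQ HQR.
- move=> f a b Hab.
  pose mix m (i : 'I_(arity f)) := if (i < m)%N then b i else a i.
  suff Hmix m : syntactic_cong (interp a) (interp (mix m)).
    by have -> : b = mix (arity f) by apply: functional_extensionality => i; rewrite /mix ltn_ord.
  elim: m => [|m IH]; first by rewrite /mix; move=> t v k.
  case: (ltnP m (arity f)) => [lt_m|le_m]; last first.
    suff -> : mix m.+1 = mix m by [].
    apply: functional_extensionality => i; rewrite /mix.
    by rewrite !(leq_trans (ltn_ord i)) // (leq_trans le_m).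
  pose i0 := Ordinal lt_m.
  have mixE m' : (m' = m \/ m' = m.+1) -> mix m' = fun i => if i == i0 then mix m' i0 else mix m i.
    move=> Hm'; apply: functional_extensionality => i; case: eqP => [-> //|/eqP ne].
    have ne' : nat_of_ord i != m by apply: contra ne => /eqP e; apply/eqP/val_inj.
    by rewrite /mix; case: Hm' => ->; rewrite // ltnS leq_eqVlt (negbTE ne').
  move=> t v k; rewrite (IH t v k) (mixE m (or_introl erefl)) (mixE m.+1 (or_intror erefl)).
  by apply: syntactic_cong_op_at; rewrite /mix /= ltnn ltnSn; apply: Hab.
Qed.

End SyntacticCongruence.

Section DeltaCentralizer.
Variables (S : signature) (A : algebra S) (al : rel A) (Hal : is_congruence al).
Local Notation pairs := (pair_alg Hal).
Local Notation diag := (diag Hal).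

Definition Delta (be : rel A) : rel pairs :=
  fun P Q => forall R, is_congruence R -> (forall x y, be x y -> R (diag x) (diag y)) -> R P Q.

Lemma Delta_cong be : is_congruence (Delta be).
Proof. exact: inf_cong. Qed.

Lemma Delta_diag be x y : be x y -> Delta be (diag x) (diag y).
Proof. by move=> Hxy R _; apply. Qed.

Definition in_rel (de : rel A) (P : pairs) : Prop := de (pfst P) (psnd P).

Definition Delta_diag_in (be de : rel A) :=
  forall P Q : pairs, Delta be P Q -> pfst P = psnd P -> pfst P = pfst Q -> in_rel de Q.

Definition diag_syntactic (be de : rel A) :=
  forall x y, be x y -> syntactic_cong (in_rel de) (diag x) (diag y).

Lemma diag_syntactic_join b1 b2 de : diag_syntactic b1 de -> diag_syntactic b2 de ->
  diag_syntactic (cg_join b1 b2) de.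
Proof.
have [Hr [Hs [Ht Hop]]] := syntactic_cong_is_cong (in_rel de).
have Hdiag : is_congruence (fun x y => syntactic_cong (in_rel de) (diag x) (diag y)).
  split; [|split; [|split]] => [x|x y|x y z|f a b Hab]; [exact: Hr|exact: Hs|exact: Ht|].
  by have := Hop f (fun i => diag (a i)) (fun i => diag (b i)) Hab; rewrite !diag_op.
by move=> H1 H2; apply: (join_min Hdiag).
Qed.

Lemma diag_syntactic_of_centralizes be de : is_congruence be -> centralizes be al de ->
  diag_syntactic be de.
Proof.
move=> Hbe HC x y Hxy t v k.
have Hv j : al (pfst (v j)) (psnd (v j)) by apply: pair_al.
have E1 z : pfst (eval (upd v k (diag z)) t) =
    eval (sel (fun j => j == k) (fun _ => z) (fun j => pfst (v j))) t.
  rewrite eval_pfst; congr eval; apply: functional_extensionality => j.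
  by rewrite /upd /sel; case: (j == k).
have E2 z : psnd (eval (upd v k (diag z)) t) =
    eval (sel (fun j => j == k) (fun _ => z) (fun j => psnd (v j))) t.
  rewrite eval_psnd; congr eval; apply: functional_extensionality => j.
  by rewrite /upd /sel; case: (j == k).
rewrite /in_rel !E1 !E2.
by split; apply: HC => // j; apply: (cong_sym Hbe).
Qed.

Lemma Delta_diag_in_of_syntactic be de : is_congruence de -> diag_syntactic be de ->
  Delta_diag_in be de.
Proof.
move=> Hde Hsyn P Q HPQ HP _.
have HPQ' : syntactic_cong (in_rel de) P Q.
  by apply: HPQ; [apply: syntactic_cong_is_cong | exact: Hsyn].
by apply/(syntactic_cong_sat HPQ'); rewrite /in_rel HP; apply: cong_refl.
Qed.

Section Modular.
Variables (E : identities S) (HCM : congruence_modular E) (HA : models E A).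
Variables (be de : rel A) (Hbe : is_congruence be) (Hde : is_congruence de).

(* Shifting along the kernels of the two projections spreads [Delta_diag_in]
   from diagonal pairs to all pairs. *)
Lemma Delta_snd : Delta_diag_in be de ->
  forall P Q : pairs, Delta be P Q -> pfst P = pfst Q -> de (psnd P) (psnd Q).
Proof.
move=> Hin P Q HPQ e1.
have Hal2 : al (psnd P) (psnd Q).
  by apply: (cong_trans Hal (cong_sym Hal (pair_al P))); rewrite e1; apply: pair_al.
suff : Delta be (diag (psnd P)) (mkpair Hal Hal2) by move/Hin; apply.
apply: (shifting HCM (models_pair_alg HA) (fst_ker_cong Hal) (snd_ker_cong Hal)
          (Delta_cong be) _ _ _ _ _ HPQ) => //.
by move=> X Y [[e _] [_ e']]; rewrite (pair_ext e e'); apply: (cong_refl (Delta_cong be)).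
Qed.

Lemma Delta_eval_sel t (p : pred nat) (a b c d : nat -> A)
    (Hac : forall k, al (sel p a c k) (sel p b c k))
    (Had : forall k, al (sel p a d k) (sel p b d k)) :
  (forall k, be (c k) (d k)) ->
  Delta be (eval (fun k => mkpair Hal (Hac k)) t) (eval (fun k => mkpair Hal (Had k)) t).
Proof.
move=> Hcd; apply: (cong_eval (Delta_cong be)) => k.
rewrite /sel in Hac Had *; case: (p k) (Hac k) (Had k) => h1 h2.
- by rewrite (pair_ext (P := mkpair Hal h1) (Q := mkpair Hal h2) erefl erefl);
    apply: (cong_refl (Delta_cong be)).
- rewrite (pair_ext (P := mkpair Hal h1) (Q := diag (c k)) erefl erefl).
  by rewrite (pair_ext (P := mkpair Hal h2) (Q := diag (d k)) erefl erefl); apply: Delta_diag.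
Qed.

Lemma centralizes_of_Delta_diag_in : Delta_diag_in be de -> centralizes al be de.
Proof.
move=> Hin t p a b c d Hab Hcd Hxy.
have Hac k : al (sel p a c k) (sel p b c k).
  by rewrite /sel; case: (p k); [apply: Hab | apply: cong_refl].
have Had k : al (sel p a d k) (sel p b d k).
  by rewrite /sel; case: (p k); [apply: Hab | apply: cong_refl].
pose Q1 := eval (fun k => mkpair Hal (Hac k)) t.
pose Q2 := eval (fun k => mkpair Hal (Had k)) t.
have [Q1a Q1b] : pfst Q1 = eval (sel p a c) t /\ psnd Q1 = eval (sel p b c) t.
  by rewrite eval_pfst eval_psnd.
have [Q2a Q2b] : pfst Q2 = eval (sel p a d) t /\ psnd Q2 = eval (sel p b d) t.
  by rewrite eval_pfst eval_psnd.
have Hbe_cd : be (eval (sel p a c) t) (eval (sel p a d) t).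
  by apply: (cong_eval Hbe) => k; rewrite /sel; case: (p k); [apply: cong_refl|].
have Hsh := shifting HCM (models_pair_alg HA) (Delta_cong be) (fst_ker_cong Hal)
  (pair_rel_cong Hal Hde Hde).
rewrite -Q1b -Q2b.
apply: (proj2 (Hsh _ (diag (eval (sel p a c) t)) Q1 (diag (eval (sel p a d) t)) Q2 _ _ _ _ _)).
- move=> X Y [HXY [e _]]; split; first by rewrite e; apply: cong_refl.
  exact: Delta_snd.
- by split; rewrite ?Q1a.
- by split; rewrite ?Q2a.
- exact: (Delta_diag Hbe_cd).
- exact: Delta_eval_sel.
- by split.
Qed.

End Modular.
End DeltaCentralizer.

Definition proper (S : signature) (A : algebra S) (th : rel A) := exists x y, ~ th x y.

Section Commutator.
Variables (S : signature) (A : algebra S).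
Implicit Types (al be th ze de phi : rel A).

Lemma comm_cong th ze : is_congruence (commutator th ze).
Proof. exact: inf_cong. Qed.

Lemma comm_centralizes th ze : centralizes th ze (commutator th ze).
Proof.
move=> t p a b c d Hab Hcd H de Hde HC.
exact: (HC t p a b c d Hab Hcd (H de Hde HC)).
Qed.

Lemma centralizes_subr al be be' de : subrel be' be -> centralizes al be de ->
  centralizes al be' de.
Proof. by move=> Hbe HC t p a b c d Hab Hcd; apply: HC => // k; apply: Hbe. Qed.

Lemma centralizes_self phi be : is_congruence phi -> centralizes phi be phi.
Proof.
move=> Hphi t p a b c d Hab Hcd H.
have Hba u : phi (eval (sel p b u) t) (eval (sel p a u) t).
  apply: (cong_eval Hphi) => k; rewrite /sel; case: (p k); last exact: cong_refl.
  exact: cong_sym.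
exact: (cong_trans Hphi (Hba c) (cong_trans Hphi H (cong_sym Hphi (Hba d)))).
Qed.

Lemma comm_sub_meet th ze : is_congruence th -> is_congruence ze ->
  subrel (commutator th ze) (cg_meet th ze).
Proof.
move=> Hth Hze x y; apply; first exact: meet_cong.
move=> t p a b c d Hab Hcd [Hth_ad Hze_ad]; split.
- exact: (centralizes_self Hth Hab Hcd Hth_ad).
- apply: (cong_eval Hze) => k; rewrite /sel; case: (p k) => //; exact: cong_refl.
Qed.

End Commutator.

(* A maximal proper congruence [phi] is prime: if [th, ze] is below [phi] but
   [th] and [ze] are not, then [th \/ phi] and [ze \/ phi] are total, and the
   term condition propagates to C(top, top; phi), i.e. A/phi is abelian. *)
Section MaximalPrime.
Variables (S : signature) (E : identities S) (A : algebra S).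
Hypotheses (HCM : congruence_modular E) (HA : models E A).
Implicit Types (al be th ze de phi : rel A).

Lemma centralizes_of_comm_sub th ze phi :
  is_congruence th -> is_congruence ze -> is_congruence phi ->
  subrel (commutator th ze) phi -> centralizes ze th phi.
Proof.
move=> Hth Hze Hphi Hc.
apply: (centralizes_of_Delta_diag_in (Hal := Hze) HCM HA Hth Hphi).
have Hin := Delta_diag_in_of_syntactic (@comm_cong _ _ th ze)
  (diag_syntactic_of_centralizes (Hal := Hze) Hth (@comm_centralizes _ _ th ze)).
by move=> P Q HPQ HP HPQ1; apply: Hc; exact: (Hin _ _ HPQ HP HPQ1).
Qed.

Lemma centralizes_join al b1 b2 de :
  is_congruence al -> is_congruence b1 -> is_congruence b2 -> is_congruence de ->
  centralizes b1 al de -> centralizes b2 al de -> centralizes al (cg_join b1 b2) de.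
Proof.
move=> Hal Hb1 Hb2 Hde C1 C2.
apply: (centralizes_of_Delta_diag_in (Hal := Hal) HCM HA (join_cong b1 b2) Hde).
apply: (Delta_diag_in_of_syntactic Hde).
by apply: diag_syntactic_join; apply: diag_syntactic_of_centralizes.
Qed.

(* In A(top) modulo the syntactic congruence of the [phi]-pairs, the class of
   the diagonal is a one-element subalgebra, distinct from the class of a pair
   outside [phi]. *)
Lemma top_centralizes_absurd phi : semi_degenerate E ->
  is_congruence phi -> proper phi -> centralizes (@cg_top S A) (@cg_top S A) phi -> False.
Proof.
move=> HSD Hphi [a [b nab]] HC.
have Htop := top_cong A.
have Hsyn := diag_syntactic_of_centralizes (Hal := Htop) Htop HC.
pose syn := syntactic_cong (in_rel (Hal := Htop) phi).
have Csyn : is_congruence syn := syntactic_cong_is_cong _.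
apply: (HSD _ (models_quot Csyn (models_pair_alg HA))).
- exists (cls syn (diag Htop a)), (cls syn (@mkpair _ _ _ Htop a b I)) => e.
  have [Hab _] := syntactic_cong_sat (cls_inj Csyn e).
  by apply: nab; apply: Hab; apply: cong_refl.
- exists (cls syn (diag Htop a)) => f ar Har; apply: (cls_eq Csyn).
  apply: (cong_trans Csyn (y := interp (fun _ : 'I_(arity f) => diag Htop a))).
    by apply: (cong_op Csyn) => i; rewrite Har; apply: repr_cls.
  by rewrite diag_op; apply: Hsyn.
Qed.

Lemma maximal_prime phi : semi_degenerate E -> is_congruence phi -> proper phi ->
  (forall psi, is_congruence psi -> subrel phi psi -> proper psi -> subrel psi phi) ->
  prime_cg phi.
Proof.
move=> HSD Hphi Pphi Hmax; split=> //; split.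
  by case: Pphi => a [b nab] Htop; apply: nab; apply/Htop.
move=> th ze Hth Hze Hc.
have join_total g : is_congruence g -> ~ subrel g phi -> forall x y, cg_join g phi x y.
  move=> Hg ngphi x y; apply: NNPP => nj; apply: ngphi => u v Huv.
  by apply: (Hmax _ (join_cong g phi) (@join_r _ _ g phi)); [exists x, y | apply: join_l].
case: (classic (subrel th phi)) => [|nth]; first by left.
case: (classic (subrel ze phi)) => [|nze]; first by right.
have C1 : centralizes th (@cg_top S A) phi.
  apply: (centralizes_subr (fun x y _ => join_total ze Hze nze x y)).
  apply: (centralizes_join Hth Hze Hphi Hphi (centralizes_of_comm_sub Hth Hze Hphi Hc)).
  exact: centralizes_self.
have C2 : centralizes (@cg_top S A) (@cg_top S A) phi.
  apply: (centralizes_subr (fun x y _ => join_total th Hth nth x y)).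
  by apply: (centralizes_join (top_cong A) Hth Hphi Hphi C1); apply: centralizes_self.
by case: (top_centralizes_absurd HSD Hphi Pphi C2).
Qed.

End MaximalPrime.

Section Chains.
Variables (S : signature) (B : algebra S) (I : Type) (F : I -> rel B).
Hypothesis chainF : forall i j, subrel (F i) (F j) \/ subrel (F j) (F i).

Definition union_rel : rel B := fun x y => exists i, F i x y.

Lemma chain_fin_ub (i0 : I) n (Q : 'I_n -> I -> Prop) :
  (forall k i j, Q k i -> subrel (F i) (F j) -> Q k j) ->
  (forall k, exists i, Q k i) -> exists i, forall k, Q k i.
Proof.
move=> Qup Qex.
suff /(_ n (leqnn n)) [i Hi] :
    forall m, (m <= n)%N -> exists i, forall k : 'I_n, (k < m)%N -> Q k i.
  by exists i => k; apply: Hi.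
elim=> [|m IH] lt_m; first by exists i0.
have [i Hi] := IH (ltnW lt_m).
have [j Hj] := Qex (Ordinal lt_m).
have split_k (k : 'I_n) : (k < m.+1)%N -> (k < m)%N \/ k = Ordinal lt_m.
  by rewrite ltnS leq_eqVlt => /orP [/eqP e|]; [right; apply: val_inj | left].
case: (chainF i j) => Hij; [exists j | exists i] => k /split_k [lt_km | ->] //.
- exact: (Qup _ _ _ (Hi k lt_km) Hij).
- exact: Hi.
- exact: (Qup _ _ _ Hj Hij).
Qed.

Lemma union_chain_cong (i0 : I) : (forall i, is_congruence (F i)) -> is_congruence union_rel.
Proof.
move=> HF; split; [|split; [|split]].
- by move=> x; exists i0; apply: cong_refl.
- by move=> x y [i Hxy]; exists i; apply: cong_sym.
- move=> x y z [i Hxy] [j Hyz]; case: (chainF i j) => Hij.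
  + by exists j; apply: (cong_trans (HF j)) Hyz; apply: Hij.
  + by exists i; apply: (cong_trans (HF i) Hxy); apply: Hij.
- move=> f a b Hab.
  have [i Hi] := chain_fin_ub i0 (Q := fun k i => F i (a k) (b k))
    (fun k i j Hi Hij => Hij _ _ Hi) Hab.
  by exists i; apply: (cong_op (HF i)).
Qed.

End Chains.

(* Otherwise the reduced power of A along the chain is nontrivial, yet every
   constant is a one-element subalgebra of it. *)
Lemma union_chain_proper (S : signature) (E : identities S) (A : algebra S) (I : Type)
    (F : I -> rel A) :
  semi_degenerate E -> models E A -> I ->
  (forall i, is_congruence (F i)) -> (forall i, proper (F i)) ->
  (forall i j, subrel (F i) (F j) \/ subrel (F j) (F i)) -> proper (union_rel F).
Proof.
move=> HSD HA i0 HF PF chainF; apply: NNPP => nP.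
have Htot x y : union_rel F x y by apply: NNPP => nxy; apply: nP; exists x, y.
pose tail i : rel (power_alg A I) := fun x y => forall j, subrel (F i) (F j) -> F j (x j) (y j).
have Htail i : is_congruence (tail i).
  split; [|split; [|split]].
  - by move=> x j _; apply: cong_refl.
  - by move=> x y Hxy j Hij; apply: (cong_sym (HF j) (Hxy j Hij)).
  - by move=> x y z Hxy Hyz j Hij; apply: (cong_trans (HF j) (Hxy j Hij) (Hyz j Hij)).
  - by move=> f a b Hab j Hij; apply: (cong_op (HF j)) => k; apply: Hab.
have chain_tail i j : subrel (tail i) (tail j) \/ subrel (tail j) (tail i).
  by case: (chainF i j) => Hij; [left | right] => x y Hxy k Hk; apply: Hxy => u v /Hij /Hk.
pose Th := union_rel tail.
have CTh : is_congruence Th := union_chain_cong chain_tail i0 Htail.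
have [w Hw] := choice (fun i (p : A * A) => ~ F i p.1 p.2)
  (fun i => let: ex_intro x (ex_intro y nxy) := PF i in ex_intro _ (x, y) nxy).
apply: (HSD _ (models_quot CTh (models_power (I := I) HA))).
- exists (cls Th (fun i => (w i).1)), (cls Th (fun i => (w i).2)) => /(cls_inj CTh) [i Hi].
  by apply: (Hw i); apply: Hi.
- have [x0 _] := PF i0.
  exists (cls Th (fun _ => x0)) => f ar Har; apply: (cls_eq CTh).
  apply: (cong_trans CTh (y := @interp S (power_alg A I) f (fun _ _ => x0))).
    by apply: (cong_op CTh) => k; rewrite Har; apply: repr_cls.
  have [i Hi] := Htot (interp (fun _ : 'I_(arity f) => x0)) x0.
  by exists i => j Hij; apply: Hij.
Qed.

Lemma prime_above (S : signature) (E : identities S) (A : algebra S) :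
  congruence_modular E -> semi_degenerate E -> models E A ->
  forall g : rel A, is_congruence g -> proper g -> exists phi, prime_cg phi /\ subrel g phi.
Proof.
move=> HCM HSD HA g Hg Pg.
pose T := {psi : rel A | [/\ is_congruence psi, subrel g psi & proper psi]}.
pose R (s t : T) := boolp.asbool (subrel (proj1_sig s) (proj1_sig t)).
have RP s t : R s t <-> subrel (proj1_sig s) (proj1_sig t) by split=> /boolp.asboolP.
pose t0 : T := exist _ g (And3 Hg (fun _ _ h => h) Pg).
have [m Hm] : exists m, classical_sets.premaximal R m.
  apply: (classical_sets.ZL_preorder t0) => [s | r s t /RP Hrs /RP Hst | C Ctot].
  - by apply/RP.
  - by apply/RP => x y /Hrs /Hst.
  case: (classic (exists s, C s)) => [[s0 Cs0] | nC]; last first.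
    by exists t0 => s Cs; case: nC; exists s.
  pose J := {s : T | C s}; pose F (j : J) := proj1_sig (proj1_sig j).
  have chainF i j : subrel (F i) (F j) \/ subrel (F j) (F i).
    by case: (Ctot _ _ (proj2_sig i) (proj2_sig j)) => /RP; [left | right].
  have HF j : is_congruence (F j) by case: (proj2_sig (proj1_sig j)).
  have PF j : proper (F j) by case: (proj2_sig (proj1_sig j)).
  pose j0 : J := exist _ s0 Cs0.
  have gU : subrel g (union_rel F).
    by move=> x y h; exists j0; case: (proj2_sig s0) => _ gs0 _; apply: gs0.
  exists (exist _ (union_rel F) (And3 (union_chain_cong chainF j0 HF) gU
            (union_chain_proper HSD HA j0 HF PF chainF))).
  by move=> s Cs; apply/RP => x y h; exists (exist _ s Cs).
case: (proj2_sig m) => Hphi gphi Pphi; exists (proj1_sig m); split=> //.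
apply: (maximal_prime HCM HA HSD Hphi Pphi) => psi Hpsi phipsi Ppsi.
pose s : T := exist _ psi (And3 Hpsi (fun x y h => phipsi _ _ (gphi _ _ h)) Ppsi).
exact/(RP s m)/Hm/(RP m s).
Qed.

Section Radical.
Variables (S : signature) (A : algebra S).
Implicit Types (th ze e u x : rel A).

Lemma rho_cong th : is_congruence (rho th).
Proof. by apply: inf_cong => phi []. Qed.

Lemma rho_ext th : subrel th (rho th).
Proof. by move=> p q h phi _; apply. Qed.

Lemma rho_mono th ze : subrel th ze -> subrel (rho th) (rho ze).
Proof. by move=> Hthze p q H phi Pphi Hze; apply: H => // a b /Hthze /Hze. Qed.

Lemma rho_releq th ze : releq th ze -> cg_equiv th ze.
Proof. by move=> Hthze p q; split; apply: rho_mono => a b /Hthze. Qed.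

Lemma rho_meet th ze : is_congruence th -> is_congruence ze ->
  subrel (cg_meet (rho th) (rho ze)) (rho (cg_meet th ze)).
Proof.
move=> Hth Hze p q [Hp Hq] phi Pphi Hsub; have [_ [_ Hprime]] := Pphi.
have [Hthphi|Hzephi] := Hprime th ze Hth Hze (fun a b h => Hsub _ _ (comm_sub_meet Hth Hze h)).
- exact: (Hp phi Pphi Hthphi).
- exact: (Hq phi Pphi Hzephi).
Qed.

Lemma subrel_meet x e : subrel x e <-> releq (cg_meet x e) x.
Proof.
split=> [Hxe p q | Hxe p q /Hxe []] //.
by split=> [[]|Hx] //; split=> //; apply: Hxe.
Qed.

Lemma releq_bot_subrel th : is_congruence th ->
  (releq th (@cg_bot S A) <-> subrel th (@cg_bot S A)).
Proof.
move=> Hth; split=> [Hbot p q /Hbot // | Hbot p q].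
by split=> [/Hbot // | ->]; apply: cong_refl.
Qed.

Lemma cg_equiv_meet_sub x e : cg_equiv (cg_meet x e) x -> subrel x (rho e).
Proof.
move=> Hxe p q /rho_ext /Hxe; apply: rho_mono => a b; exact: proj2.
Qed.

Hypothesis Hsp : semiprime A.

Lemma cg_equiv_bot th : is_congruence th ->
  (cg_equiv th (@cg_bot S A) <-> releq th (@cg_bot S A)).
Proof.
move=> Hth; split=> [Hbot | ]; last exact: rho_releq.
by apply/(releq_bot_subrel Hth) => p q /rho_ext /Hbot /Hsp.
Qed.

Lemma meet_rho_bot e u : is_congruence e -> is_congruence u ->
  releq (cg_meet e u) (@cg_bot S A) -> releq (cg_meet (rho e) u) (@cg_bot S A).
Proof.
move=> He Hu /(releq_bot_subrel (meet_cong He Hu)) Heu.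
apply/(releq_bot_subrel (meet_cong (rho_cong e) Hu)) => p q [Hp Hq].
apply/Hsp; apply: (rho_mono Heu).
exact: (rho_meet He Hu (conj Hp (rho_ext Hq))).
Qed.

End Radical.

Lemma cg_equiv_top (S : signature) (E : identities S) (A : algebra S) :
  congruence_modular E -> semi_degenerate E -> models E A ->
  forall th : rel A, is_congruence th -> cg_equiv th (@cg_top S A) -> releq th (@cg_top S A).
Proof.
move=> HCM HSD HA th Hth Htop x y; split=> // _; apply: NNPP => nxy.
have [phi [Pphi Hthphi]] := prime_above HCM HSD HA Hth (ex_intro _ x (ex_intro _ y nxy)).
case: (Pphi) => _ [ntop _]; apply: ntop => p q; split=> // _.
exact: (proj2 (Htop p q) (@rho_ext _ _ (@cg_top S A) p q I) phi Pphi Hthphi).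
Qed.

Section StronglyStone.
Variables (S : signature) (A : algebra S).
Hypothesis Hsp : semiprime A.

Lemma Con_quot_strongly_stone_of_Con : Con_strongly_stone A -> Con_quot_strongly_stone A.
Proof.
move=> HS U HU; have [e [Ce [[f [Cf [ef_bot ef_top]]] Hann]]] := HS U HU.
have ann_e u : U u -> releq (cg_meet e u) (@cg_bot S A).
  by move: u; apply/(Hann e Ce)/subrel_meet.
have rho_e_sub : subrel (rho e) e.
  apply/subrel_meet/(Hann _ (rho_cong e)) => u Uu.
  exact: (meet_rho_bot Hsp Ce (HU u Uu) (ann_e u Uu)).
exists e; split=> //; split; first by exists f; split=> //; split; apply: rho_releq.
move=> x Cx; have Cxu u : U u -> is_congruence (cg_meet x u) by move/HU; apply: meet_cong.
split=> Hx.
- apply: rho_releq; apply/(Hann x Cx) => u Uu.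
  by apply/(cg_equiv_bot Hsp (Cxu u Uu)); apply: Hx.
- have /subrel_meet Hxe : subrel x e by move=> p q /(cg_equiv_meet_sub Hx) /rho_e_sub.
  move=> u Uu; apply/(cg_equiv_bot Hsp (Cxu u Uu)).
  exact: (proj2 (Hann x Cx) Hxe u Uu).
Qed.

Section Modular.
Variables (E : identities S) (HCM : congruence_modular E) (HSD : semi_degenerate E).
Hypothesis (HA : models E A).

Lemma Con_strongly_stone_of_quot : Con_quot_strongly_stone A -> Con_strongly_stone A.
Proof.
move=> HQ U HU; have [e [Ce [[f [Cf [ef_bot ef_top]]] Hann]]] := HQ U HU.
have ann_e u : U u -> releq (cg_meet e u) (@cg_bot S A).
  move=> Uu; apply/(cg_equiv_bot Hsp (meet_cong Ce (HU u Uu))).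
  by move: u Uu; apply/(Hann e Ce); apply: rho_releq; apply/subrel_meet.
exists (rho e); split; first exact: rho_cong.
split.
  exists (rho f); split; first exact: rho_cong.
  split.
  - apply/(releq_bot_subrel (meet_cong (rho_cong e) (rho_cong f))) => p q Hpq.
    by apply/Hsp/ef_bot; apply: rho_meet.
  - have Hef := cg_equiv_top HCM HSD HA (join_cong e f) ef_top.
    move=> p q; split=> // _.
    apply: (join_min (join_cong _ _) _ _ (proj2 (Hef p q) I)) => a b h.
    + by apply: join_l; apply: rho_ext.
    + by apply: join_r; apply: rho_ext.
move=> x Cx; split=> Hx.
- apply/subrel_meet; apply: cg_equiv_meet_sub; apply/(Hann x Cx) => u Uu.
  by apply: rho_releq; apply: Hx.
- move/subrel_meet: Hx => Hx u Uu.
  apply/(releq_bot_subrel (meet_cong Cx (HU u Uu))) => p q [Hp Hq].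
  by apply/(meet_rho_bot Hsp Ce (HU u Uu) (ann_e u Uu)); split=> //; apply: Hx.
Qed.

End Modular.
End StronglyStone.

Theorem proposition2p17 (S : signature) (E : identities S) :
  congruence_modular E -> semi_degenerate E ->
  forall A : algebra S, models E A -> semiprime A ->
  (Con_strongly_stone A <-> Con_quot_strongly_stone A).
Proof.
move=> HCM HSD A HA Hsp; split.
- exact: (Con_quot_strongly_stone_of_Con Hsp).
- exact: (Con_strongly_stone_of_quot Hsp HCM HSD HA).
Qed.
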